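(* Let $\Omega\subset\mathbb{R}^3$ be a bounded domain and $N>0$. For all $u,v\in L^4(\Omega)^3$, $$\|F_N(u)\,u\otimes u-F_N(v)\,v\otimes v\|_{L^2}\leqslant 3N\|u-v\|_{L^4}\quad\text{and}\quad\|F_N(u)\,u\otimes u\|_{L^2}\leqslant N\|u\|_{L^4}.$$
   Context: $f_N(r)=\min\{1,N/r\}$ for $r\geqslant0$ (with $f_N(0)=1$), and $F_N(u)=f_N(\|u\|_{L^4(\Omega)^3})$. For $u,v:\Omega\to\mathbb{R}^3$, $u\otimes v$ is the matrix-valued function $(u_iv_j)_{i,j=1}^3$; $L^2$-norms of matrix-valued functions use the Frobenius (Euclidean) norm pointwise. $L^r$ denotes $L^r(\Omega)^3$ (or its matrix analogue). *)

From HB Require Import structures.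
From mathcomp Require Import all_boot all_order all_algebra.
From mathcomp Require Import all_classical all_reals all_analysis.
Set Implicit Arguments. Unset Strict Implicit. Unset Printing Implicit Defensive.
Import Order.TTheory GRing.Theory Num.Theory.
Import numFieldNormedType.Exports.
Local Open Scope classical_set_scope.
Local Open Scope ring_scope.

Definition R3 (R : realType) := ((R * R) * R)%type.

Definition leb3 (R : realType) :=
  ((@lebesgue_measure R \x @lebesgue_measure R) \x @lebesgue_measure R)%E.

Definition eucl (R : realType) (a : 'rV[R]_3) : R := Num.sqrt (\sum_(i < 3) a 0 i ^+ 2).

Definition tens (R : realType) (a b : 'rV[R]_3) : 'M[R]_3 := \matrix_(i, j) (a 0 i * b 0 j).
Definition frob (R : realType) (A : 'M[R]_3) : R :=
  Num.sqrt (\sum_(i < 3) \sum_(j < 3) A i j ^+ 2).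

Definition LpnormD (R : realType) (D : set (R3 R)) (p : R) (g : R3 R -> R) : \bar R :=
  ((\int[@leb3 R]_(x in D) (`|g x| `^ p)%:E) `^ p^-1)%E.

Definition L4vec (R : realType) (D : set (R3 R)) (u : R3 R -> 'rV[R]_3) : \bar R :=
  LpnormD D 4 (fun x => eucl (u x)).
Definition L2mat (R : realType) (D : set (R3 R)) (A : R3 R -> 'M[R]_3) : \bar R :=
  LpnormD D 2 (fun x => frob (A x)).

Definition inL4 (R : realType) (D : set (R3 R)) (u : R3 R -> 'rV[R]_3) : Prop :=
  (forall i : 'I_3, measurable_fun D (fun x => u x 0 i)) /\ (L4vec D u < +oo)%E.

Definition fN (R : realType) (N r : R) : R := if r == 0 then 1 else Num.min 1 (N / r).

Definition FN (R : realType) (D : set (R3 R)) (N : R) (u : R3 R -> 'rV[R]_3) : R :=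
  fN N (fine (L4vec D u)).

From HB Require Import structures.
From mathcomp Require Import all_boot all_order all_algebra.
From mathcomp Require Import all_classical all_reals all_analysis.
From mathcomp Require Import measurable_realfun ring lra.
Set Implicit Arguments. Unset Strict Implicit. Unset Printing Implicit Defensive.
Import Order.TTheory GRing.Theory Num.Theory.
Import numFieldNormedType.Exports.
Local Open Scope classical_set_scope.
Local Open Scope ring_scope.

(* Write U = F_N(u), V = F_N(v) and a, b, d for the L^4 norms of u, v, u - v. Pointwise,
     U u(x)u(x) - V v(x)v(x) = U (u - v)(x) u(x) + U v(x) (u - v)(x) + (U - V) v(x) v(x),
   and the Frobenius norm of a tensor product is the product of the Euclidean norms, so
   Minkowski's inequality and Hoelder's inequality ||fg||_2 <= ||f||_4 ||g||_4 bound the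
   L^2 norm by U (d a + b d) + |U - V| b^2. By symmetry b <= a; then f_N(a) a <= N and
   (f_N(b) - f_N(a)) b^2 <= N (a - b) <= N d, where f_N(r) = N / max(N, r), give 3 N d.
   The second estimate is f_N(a) a^2 <= N a. *)

Section sqrt_sum_sqr.
Variables (R : rcfType) (I : finType).
Implicit Types a b : I -> R.

Lemma sum_mul_sqr_le a b :
  (\sum_i a i * b i) ^+ 2 <= (\sum_i a i ^+ 2) * (\sum_i b i ^+ 2).
Proof.
set A := \sum_i a i ^+ 2; set B := \sum_i b i ^+ 2; set C := \sum_i a i * b i.
have lagrange : \sum_i \sum_j (a i * b j - a j * b i) ^+ 2 = A * B + B * A - 2 * (C * C).
  rewrite /A /B /C !big_distrlr mulr_sumr -big_split -sumrB /=.
  apply: eq_bigr => i _; rewrite mulr_sumr -big_split -sumrB.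
  by apply: eq_bigr => j _ /=; ring.
have : 0 <= \sum_i \sum_j (a i * b j - a j * b i) ^+ 2.
  by apply: sumr_ge0 => i _; apply: sumr_ge0 => j _; exact: sqr_ge0.
rewrite lagrange expr2; lra.
Qed.

Lemma sqrt_sum_sqrD_le a b :
  Num.sqrt (\sum_i (a i + b i) ^+ 2) <=
  Num.sqrt (\sum_i a i ^+ 2) + Num.sqrt (\sum_i b i ^+ 2).
Proof.
set A := \sum_i a i ^+ 2; set B := \sum_i b i ^+ 2; set C := \sum_i a i * b i.
have A0 : 0 <= A by apply: sumr_ge0 => i _; exact: sqr_ge0.
have B0 : 0 <= B by apply: sumr_ge0 => i _; exact: sqr_ge0.
have -> : \sum_i (a i + b i) ^+ 2 = A + B + 2 * C.
  by rewrite /A /B /C mulr_sumr -!big_split /=; apply: eq_bigr => i _; ring.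
have CAB : C <= Num.sqrt A * Num.sqrt B.
  rewrite -sqrtrM //; apply: le_trans (ler_norm C) _.
  by rewrite -sqrtr_sqr ler_wsqrtr // sum_mul_sqr_le.
rewrite -[leRHS]ger0_norm ?addr_ge0 ?sqrtr_ge0 // -sqrtr_sqr.
by rewrite ler_wsqrtr // sqrrD !sqr_sqrtr //; lra.
Qed.

End sqrt_sum_sqr.

Section euclidean_norms.
Variable R : realType.
Implicit Types (a b : 'rV[R]_3) (A B : 'M[R]_3).

Lemma euclD_le a b : eucl (a + b) <= eucl a + eucl b.
Proof.
rewrite /eucl (eq_bigr (fun i => (a 0 i + b 0 i) ^+ 2)) => [|i _]; last by rewrite mxE.
exact: sqrt_sum_sqrD_le.
Qed.

Lemma euclN a : eucl (- a) = eucl a.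
Proof. by rewrite /eucl; congr Num.sqrt; apply: eq_bigr => i _; rewrite mxE sqrrN. Qed.

Lemma frobE A : frob A = Num.sqrt (\sum_(k : 'I_3 * 'I_3) A k.1 k.2 ^+ 2).
Proof. by rewrite /frob pair_bigA. Qed.

Lemma frobD_le A B : frob (A + B) <= frob A + frob B.
Proof.
rewrite !frobE (eq_bigr (fun k => (A k.1 k.2 + B k.1 k.2) ^+ 2)) => [|k _].
  exact: sqrt_sum_sqrD_le.
by rewrite mxE.
Qed.

Lemma frobN A : frob (- A) = frob A.
Proof. by rewrite !frobE; congr Num.sqrt; apply: eq_bigr => k _; rewrite mxE sqrrN. Qed.

Lemma frobZ c A : frob (c *: A) = `|c| * frob A.
Proof.
rewrite !frobE -sqrtr_sqr -sqrtrM ?sqr_ge0 // mulr_sumr; congr Num.sqrt.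
by apply: eq_bigr => k _; rewrite mxE exprMn.
Qed.

Lemma frob_tens a b : frob (tens a b) = eucl a * eucl b.
Proof.
rewrite /frob /eucl -sqrtrM ?sumr_ge0 // => [|i _]; last exact: sqr_ge0.
congr Num.sqrt; rewrite big_distrlr /=; apply: eq_bigr => i _; apply: eq_bigr => j _.
by rewrite mxE exprMn.
Qed.

Lemma scale_tens_subE c c' a b :
  c *: tens a a - c' *: tens b b =
  c *: tens (a - b) a + c *: tens b (a - b) + (c - c') *: tens b b.
Proof. by apply/matrixP => i j; rewrite !mxE; ring. Qed.

Lemma frob_scale_tens_sub_le c c' a b : 0 <= c ->
  frob (c *: tens a a - c' *: tens b b) <=
  c * (eucl (a - b) * eucl a) + c * (eucl b * eucl (a - b)) + `|c - c'| * (eucl b * eucl b).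
Proof.
move=> c0; rewrite scale_tens_subE.
apply: le_trans (frobD_le _ _) _; rewrite frobZ frob_tens lerD2r.
apply: le_trans (frobD_le _ _) _.
by rewrite !frobZ !frob_tens ger0_norm.
Qed.

End euclidean_norms.

Section truncation_factor.
Variables (R : realType) (N : R).
Hypothesis N0 : 0 < N.
Implicit Types a b d r : R.

Lemma fNE r : 0 <= r -> fN N r = N / Num.max N r.
Proof.
rewrite /fN le0r => /predU1P[->|r0]; first by rewrite eqxx max_l ?ltW ?divff ?gt_eqF.
rewrite gt_eqF //; have [rN|Nr] := leP r N.
  by rewrite divff ?gt_eqF // min_l // ler_pdivlMr // mul1r.
by rewrite min_r // ler_pdivrMr // mul1r ltW.
Qed.

Lemma max_gt0 r : 0 < Num.max N r.
Proof. by rewrite lt_max N0. Qed.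

Lemma fN_ge0 r : 0 <= r -> 0 <= fN N r.
Proof. by move=> r0; rewrite fNE // divr_ge0 ?ltW ?max_gt0. Qed.

Lemma fN_mul_le r : 0 <= r -> fN N r * r <= N.
Proof.
move=> r0; rewrite fNE // mulrAC ler_pdivrMr ?max_gt0 //.
by rewrite ler_pM2l // le_max lexx orbT.
Qed.

Lemma fN_le a b : 0 <= b -> b <= a -> fN N a <= fN N b.
Proof.
move=> b0 ba; rewrite !fNE ?(le_trans b0) // ler_pM2l // lef_pV2 ?posrE ?max_gt0 //.
by rewrite ge_max le_max lexx /= le_max ba orbT.
Qed.

Lemma fN_subr_mul_sqr_le a b : 0 <= b -> b <= a ->
  (fN N b - fN N a) * b ^+ 2 <= N * (a - b).
Proof.
move=> b0 ba; rewrite !fNE ?(le_trans b0) //.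
set m := Num.max N a; set n := Num.max N b.
have n0 : 0 < n := max_gt0 b.
have bn : b <= n by rewrite le_max lexx orbT.
have nm : n <= m by rewrite ge_max le_max lexx /= le_max ba orbT.
have m0 : 0 < m := lt_le_trans n0 nm.
have Nn : N <= n by rewrite le_max lexx.
have mn_ab : m - n <= a - b by rewrite lerBlDr ge_max; apply/andP; split; lra.
have -> : (N / n - N / m) * b ^+ 2 = N * (m - n) * (b / n) * (b / m).
  by field; rewrite !gt_eqF.
have bn1 : b / n <= 1 by rewrite ler_pdivrMr // mul1r.
have bm1 : b / m <= 1 by rewrite ler_pdivrMr // mul1r (le_trans bn).
have bnm1 : b / n * (b / m) <= 1.
  by apply: mulr_ile1; rewrite // divr_ge0 // ltW.
have Nmn0 : 0 <= N * (m - n) by rewrite mulr_ge0 ?subr_ge0 // ltW.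
rewrite -mulrA; apply: le_trans (ler_wpM2l Nmn0 bnm1) _.
by rewrite mulr1 ler_pM2l.
Qed.

Lemma fN_cross_terms_le a b d : 0 <= b -> b <= a -> a - b <= d ->
  fN N a * (d * a) + fN N a * (b * d) + `|fN N a - fN N b| * (b * b) <= 3 * N * d.
Proof.
move=> b0 ba abd; have a0 := le_trans b0 ba; have d0 : 0 <= d by lra.
have Ua := fN_mul_le a0; have UV := fN_subr_mul_sqr_le b0 ba.
rewrite ler0_norm ?subr_le0 ?fN_le // opprB -expr2.
have Uad : fN N a * a * d <= N * d := ler_wpM2r d0 Ua.
have Ubd : fN N a * b * d <= fN N a * a * d := ler_wpM2r d0 (ler_wpM2l (fN_ge0 a0) ba).
have Nab : N * (a - b) <= N * d := ler_wpM2l (ltW N0) abd.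
have -> : fN N a * (d * a) + fN N a * (b * d) = fN N a * a * d + fN N a * b * d by ring.
lra.
Qed.

End truncation_factor.

Section Lnorm_bounds.
Context d (T : measurableType d) (R : realType).
Variable mu : {measure set T -> \bar R}.
Local Open Scope ereal_scope.
Local Notation "''N_' p [ f ]" := (Lnorm mu p%:E (EFin \o f)).
Implicit Types (p c : R) (f g : T -> R).

Lemma LnormE p f : 'N_p[f] = (\int[mu]_x (`|f x| `^ p)%:E) `^ p^-1.
Proof. by rewrite unlock. Qed.

Lemma measurable_powR_norm p f : measurable_fun setT f ->
  measurable_fun setT (fun x => (`|f x| `^ p)%:E).
Proof.
move=> mf; apply/measurable_EFinP.
apply: (@measurableT_comp _ _ _ _ _ _ (@powR R ^~ p)); first exact: measurable_powR.
exact: measurableT_comp.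
Qed.

Lemma Lnorm_le p f g : (0 < p)%R ->
  measurable_fun setT f -> measurable_fun setT g ->
  (forall x, `|f x| <= `|g x|)%R -> 'N_p[f] <= 'N_p[g].
Proof.
move=> p0 mf mg fg; rewrite !LnormE.
have int_ge0 (h : T -> R) : 0 <= \int[mu]_x (`|h x| `^ p)%:E.
  by apply: integral_ge0 => x _; rewrite lee_fin powR_ge0.
apply: gt0_ler_poweR; first by rewrite invr_ge0 ltW.
- by rewrite in_itv /= int_ge0 leey.
- by rewrite in_itv /= int_ge0 leey.
apply: ge0_le_integral => //; try exact: measurable_powR_norm.
by move=> x _; rewrite lee_fin ge0_ler_powR // ltW.
Qed.

Lemma Lnorm_scale p c f : (0 < p)%R -> (0 <= c)%R ->
  measurable_fun setT f -> 'N_p[(fun x => c * f x)%R] = c%:E * 'N_p[f].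
Proof.
move=> p0 c0 mf; rewrite !LnormE.
under eq_integral do rewrite normrM powRM // EFinM.
rewrite ge0_integralZl_EFin ?powR_ge0 //; last exact: measurable_powR_norm.
rewrite poweRM ?lee_fin ?powR_ge0 ?integral_ge0 //.
by rewrite poweR_EFin -powRrM mulfV ?gt_eqF // powRr1 // ger0_norm.
Qed.

(* Hoelder with exponents (2, 2) applied to [f ^+ 2] and [g ^+ 2]. *)
Lemma Lnorm2_mul_le f g : measurable_fun setT f -> measurable_fun setT g ->
  'N_2[(fun x => f x * g x)%R] <= 'N_4[f] * 'N_4[g].
Proof.
move=> mf mg.
have half : (2^-1 + 2^-1 = 1 :> R)%R by rewrite [RHS](splitr 1) mul1r.
have := hoelder mu (measurable_funX 2 mf) (measurable_funX 2 mg) (ltr0Sn _ 1) (ltr0Sn _ 1) half.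
set X := \int[mu]_x (`|f x| `^ 4)%:E; set Y := \int[mu]_x (`|g x| `^ 4)%:E.
set Z := \int[mu]_x (`|f x * g x| `^ 2)%:E.
have -> : Lnorm mu 1 (EFin \o (fun x => f x ^+ 2) \* (fun x => g x ^+ 2))%R = Z.
  rewrite Lnorm1; apply: eq_integral => x _.
  by rewrite /= powR_mulrn // -normrX exprMn.
have N2sqr h : 'N_2[(fun x => h x ^+ 2)%R] = (\int[mu]_x (`|h x| `^ 4)%:E) `^ 2^-1.
  rewrite LnormE; congr (_ `^ _); apply: eq_integral => x _; congr EFin.
  by rewrite normrX -powR_mulrn // -powRrM -natrM.
rewrite !N2sqr !LnormE -/X -/Y -/Z => hZ.
apply: (@le_trans _ _ ((X `^ 2^-1 * Y `^ 2^-1) `^ 2^-1)).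
  by apply: gt0_ler_poweR; rewrite ?in_itv /= ?integral_ge0 ?mule_ge0 ?poweR_ge0 ?leey //
    => x _; rewrite lee_fin powR_ge0.
by rewrite poweRM ?poweR_ge0 // -!poweRrM -invfM -natrM.
Qed.

Lemma Lnorm2_scale_mul_le c f g : (0 <= c)%R ->
  measurable_fun setT f -> measurable_fun setT g ->
  'N_2[(fun x => c * (f x * g x))%R] <= c%:E * ('N_4[f] * 'N_4[g]).
Proof.
move=> c0 mf mg; rewrite Lnorm_scale //; last exact: measurable_funM.
by apply: lee_wpmul2l; rewrite ?lee_fin // Lnorm2_mul_le.
Qed.

Lemma Lnorm_add3_le p f g h : (1 <= p)%R ->
  measurable_fun setT f -> measurable_fun setT g -> measurable_fun setT h ->
  'N_p[(fun x => f x + g x + h x)%R] <= 'N_p[f] + 'N_p[g] + 'N_p[h].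
Proof.
move=> p1 mf mg mh.
apply: le_trans (minkowski_EFin mu (measurable_funD mf mg) mh p1) _.
by rewrite leeD2r // minkowski_EFin.
Qed.

End Lnorm_bounds.

Section measurable_matrix_fields.
Context d (T : measurableType d) (R : realType) (D : set T).

Definition measurable_mx {m n} (A : T -> 'M[R]_(m, n)) :=
  forall i j, measurable_fun D (fun x => A x i j).

Lemma measurable_mxB m n (A B : T -> 'M[R]_(m, n)) :
  measurable_mx A -> measurable_mx B -> measurable_mx (fun x => A x - B x).
Proof.
move=> mA mB i j; rewrite (_ : (fun x => _) = (fun x => A x i j - B x i j)).
  exact: measurable_funB.
by apply/funext => x; rewrite !mxE.
Qed.

Lemma measurable_mxD m n (A B : T -> 'M[R]_(m, n)) :
  measurable_mx A -> measurable_mx B -> measurable_mx (fun x => A x + B x).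
Proof.
move=> mA mB i j; rewrite (_ : (fun x => _) = (fun x => A x i j + B x i j)).
  exact: measurable_funD.
by apply/funext => x; rewrite !mxE.
Qed.

Lemma measurable_mxZ m n c (A : T -> 'M[R]_(m, n)) :
  measurable_mx A -> measurable_mx (fun x => c *: A x).
Proof.
move=> mA i j; rewrite (_ : (fun x => _) = (fun x => c * A x i j)).
  exact: measurable_funM.
by apply/funext => x; rewrite !mxE.
Qed.

Lemma measurable_mx_tens (a b : T -> 'rV[R]_3) :
  measurable_mx a -> measurable_mx b -> measurable_mx (fun x => tens (a x) (b x)).
Proof.
move=> ma mb i j; rewrite (_ : (fun x => _) = (fun x => a x 0 i * b x 0 j)).
  exact: measurable_funM.
by apply/funext => x; rewrite !mxE.
Qed.

Lemma measurable_eucl (a : T -> 'rV[R]_3) :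
  measurable_mx a -> measurable_fun D (fun x => eucl (a x)).
Proof.
move=> ma; apply: measurableT_comp (continuous_measurable_fun (@sqrt_continuous R)) _.
by apply: measurable_sum => i; apply: measurable_funX.
Qed.

Lemma measurable_frob (A : T -> 'M[R]_3) :
  measurable_mx A -> measurable_fun D (fun x => frob (A x)).
Proof.
move=> mA; apply: measurableT_comp (continuous_measurable_fun (@sqrt_continuous R)) _.
by apply: measurable_sum => i; apply: measurable_sum => j; apply: measurable_funX.
Qed.

End measurable_matrix_fields.

Lemma ballR3 (R : realType) (c : R3 R) r :
  ball c r = (ball c.1.1 r `*` ball c.1.2 r) `*` ball c.2 r.
Proof. by case: c => [[]]. Qed.

(* [R3 R] is second countable: every open set is a countable union of balls with rational
   centres and radii. *)
Lemma open_measurable_R3 (R : realType) (O : set (R3 R)) : open O -> measurable O.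
Proof.
move=> oO.
pose box (k : rat * rat * rat * rat) : set (R3 R) :=
  ball (((ratr k.1.1.1, ratr k.1.1.2), ratr k.1.2) : R3 R) (ratr k.2).
have -> : O = \bigcup_(k in [set k | box k `<=` O]) box k.
  apply/seteqP; split => [x Ox|x [k kO]]; last exact: kO.
  have [e e0 exO] : exists2 e : R, 0 < e & ball x e `<=` O by exact/nbhs_ballP/oO.
  have [r] := rat_in_itvoo (divr_gt0 e0 (ltr0n _ 2)); rewrite in_itv /= => /andP[r0 re].
  have near_rat (y : R) : exists q : rat, ball (ratr q : R) (ratr r) y.
    have [q] : exists q : rat, ratr q \in `]y - ratr r, y + ratr r[.
      by apply: rat_in_itvoo; lra.
    by rewrite in_itv /= -ltr_distlC distrC -ball_normE => yq; exists q.
  case: x Ox exO => [[x1 x2] x3] _ exO.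
  have [[q1 h1] [q2 h2] [q3 h3]] := And3 (near_rat x1) (near_rat x2) (near_rat x3).
  have xk : box (q1, q2, q3, r) ((x1, x2), x3) by rewrite /box ballR3.
  exists (q1, q2, q3, r) => // y ky; apply: exO.
  apply: le_ball (ball_triangle (ball_sym xk) ky).
  by rewrite [leRHS](splitr e) ltW // ltrD.
rewrite bigcup_mkcond; apply: countable_bigcupT_measurable; first exact: countableP.
move=> k; case: ifP => _; last exact: measurable0.
by rewrite /box ballR3; apply: measurableX; [apply: measurableX|]; exact: measurable_ball.
Qed.

Section truncated_tensor_estimates.
Variables (R : realType) (D : set (R3 R)) (N : R).
Hypotheses (mD : measurable D) (N0 : 0 < N).
Local Open Scope ereal_scope.
Local Notation "''N_' p [ f ]" := (Lnorm (@leb3 R) p%:E (EFin \o f)).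
Implicit Types u v : R3 R -> 'rV[R]_3.

(* [leb3] is a measure on a product of Lebesgue measurable types that is convertible, but
   not syntactically equal, to the canonical measurable type [R3 R]: the general [Lnorm]
   lemmas are instantiated with [@leb3 R] explicitly, and sometimes need plain [exact]. *)

Lemma LpnormD_restrict p g : (0 < p)%R -> LpnormD D p g = 'N_p[g \_ D].
Proof.
move=> p0; rewrite /LpnormD [in LHS]integral_mkcond LnormE; congr (_ `^ _).
apply: eq_integral => x _; rewrite !patchE; case: ifP => // _.
by rewrite normr0 powR0 ?gt_eqF.
Qed.

Lemma L4vecE u : L4vec D u = 'N_4[(fun x => eucl (u x)) \_ D].
Proof. exact: LpnormD_restrict. Qed.

Lemma L4vec_ge0 u : 0 <= L4vec D u.
Proof. by rewrite L4vecE Lnorm_ge0. Qed.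

Lemma L4vec_fineK u : inL4 D u -> (fine (L4vec D u))%:E = L4vec D u.
Proof. by case=> _ fin_u; rewrite fineK // ge0_fin_numE // L4vec_ge0. Qed.

Lemma L4vec_subC u v : L4vec D (fun x => u x - v x)%R = L4vec D (fun x => v x - u x)%R.
Proof. by rewrite /L4vec; congr LpnormD; apply/funext => x; rewrite -euclN opprB. Qed.

Lemma L2mat_subC (A B : R3 R -> 'M[R]_3) :
  L2mat D (fun x => A x - B x)%R = L2mat D (fun x => B x - A x)%R.
Proof. by rewrite /L2mat; congr LpnormD; apply/funext => x; rewrite -frobN opprB. Qed.

Lemma measurable_mx_inL4 u : inL4 D u -> measurable_mx D u.
Proof. by case=> mu _ i j; rewrite ord1. Qed.

Lemma measurable_eucl_restrict u : measurable_mx D u ->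
  measurable_fun setT ((fun x => eucl (u x)) \_ D).
Proof. by move=> mu; apply/(measurable_restrictT _ mD)/measurable_eucl. Qed.

Lemma measurable_frob_restrict (A : R3 R -> 'M[R]_3) : measurable_mx D A ->
  measurable_fun setT ((fun x => frob (A x)) \_ D).
Proof. by move=> mA; apply/(measurable_restrictT _ mD)/measurable_frob. Qed.

Lemma L2mat_FN_le u : inL4 D u ->
  L2mat D (fun x => FN D N u *: tens (u x) (u x))%R <= N%:E * L4vec D u.
Proof.
move=> hu; pose eu := (fun x => eucl (u x)) \_ D.
have meu := measurable_eucl_restrict (measurable_mx_inL4 hu).
rewrite /FN; set a := fine (L4vec D u).
have a0 : (0 <= a)%R by rewrite fine_ge0 ?L4vec_ge0.
have Ha : L4vec D u = a%:E by rewrite L4vec_fineK.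
rewrite Ha /L2mat LpnormD_restrict //.
rewrite (_ : _ \_ D = fun x => fN N a * (eu x * eu x))%R; last first.
  apply/funext => x; rewrite /eu !patchE; case: ifP => _; last by rewrite !mulr0.
  by rewrite frobZ frob_tens ger0_norm // fN_ge0.
apply: le_trans (Lnorm2_scale_mul_le (@leb3 R) (fN_ge0 N0 a0) meu meu) _.
by rewrite -L4vecE Ha -!EFinM lee_fin mulrA ler_wpM2r // fN_mul_le.
Qed.

Lemma L4vecD_le u v : measurable_mx D u -> measurable_mx D v ->
  L4vec D (fun x => u x + v x)%R <= L4vec D u + L4vec D v.
Proof.
move=> mu mv; rewrite !L4vecE.
have muv := measurable_eucl_restrict (measurable_mxD mu mv).
set eu := (fun x => eucl (u x)) \_ D; set ev := (fun x => eucl (v x)) \_ D.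
have [meu mev] := (measurable_eucl_restrict mu, measurable_eucl_restrict mv).
have mink : 'N_4[(fun x => eu x + ev x)%R] <= 'N_4[eu] + 'N_4[ev].
  by apply: minkowski_EFin => //; rewrite ler1n.
apply: le_trans mink; apply: Lnorm_le => //; first exact: measurable_funD.
move=> x; rewrite /eu /ev !patchE; case: ifP => _; last by rewrite normr0 addr0.
by rewrite !ger0_norm ?addr_ge0 ?sqrtr_ge0 ?euclD_le.
Qed.

Lemma L2mat_scale_tens_sub_le c c' u v : (0 <= c)%R ->
  measurable_mx D u -> measurable_mx D v ->
  L2mat D (fun x => c *: tens (u x) (u x) - c' *: tens (v x) (v x))%R <=
  c%:E * (L4vec D (fun x => u x - v x)%R * L4vec D u) +
  c%:E * (L4vec D v * L4vec D (fun x => u x - v x)%R) +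
  `|c - c'|%:E * (L4vec D v * L4vec D v).
Proof.
move=> c0 mu mv; rewrite /L2mat LpnormD_restrict // !L4vecE.
set eu := (fun x => eucl (u x)) \_ D; set ev := (fun x => eucl (v x)) \_ D.
set ed := (fun x => eucl (u x - v x)%R) \_ D.
have [meu mev] := (measurable_eucl_restrict mu, measurable_eucl_restrict mv).
have med := measurable_eucl_restrict (measurable_mxB mu mv).
have mF : measurable_fun setT
    ((fun x => frob (c *: tens (u x) (u x) - c' *: tens (v x) (v x))%R) \_ D).
  apply: measurable_frob_restrict.
  exact: measurable_mxB (measurable_mxZ c (measurable_mx_tens mu mu))
    (measurable_mxZ c' (measurable_mx_tens mv mv)).
have [m1 m2 m3] : [/\ measurable_fun setT (fun x => c * (ed x * eu x))%R,
    measurable_fun setT (fun x => c * (ev x * ed x))%R &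
    measurable_fun setT (fun x => `|c - c'| * (ev x * ev x))%R].
  by split; apply: measurable_funM => //; apply: measurable_funM.
apply: (@le_trans _ _ 'N_2[(fun x => c * (ed x * eu x) + c * (ev x * ed x) +
    `|c - c'| * (ev x * ev x))%R]).
  apply: Lnorm_le => //; first by apply: measurable_funD => //; apply: measurable_funD.
  move=> x; rewrite /eu /ev /ed !patchE; case: ifP => _; last by rewrite !mulr0 !addr0.
  by rewrite ger0_norm ?sqrtr_ge0 // (le_trans (frob_scale_tens_sub_le _ _ _ c0)) ?ler_norm.
have two_ge1 : (1 <= 2 :> R)%R by rewrite ler1n.
apply: le_trans (Lnorm_add3_le (@leb3 R) two_ge1 m1 m2 m3) _.
apply: leeD; first apply: leeD.
- exact (Lnorm2_scale_mul_le (@leb3 R) c0 med meu).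
- exact (Lnorm2_scale_mul_le (@leb3 R) c0 mev med).
- exact (Lnorm2_scale_mul_le (@leb3 R) (normr_ge0 _) mev mev).
Qed.

Lemma L2mat_fN_sub_le a b u v : measurable_mx D u -> measurable_mx D v ->
  L4vec D u = a%:E -> L4vec D v = b%:E -> (0 <= b)%R -> (b <= a)%R ->
  L2mat D (fun x => fN N a *: tens (u x) (u x) - fN N b *: tens (v x) (v x))%R
    <= (3 * N)%:E * L4vec D (fun x => u x - v x)%R.
Proof.
move=> mu mv Ha Hb b0 ba.
apply: le_trans (L2mat_scale_tens_sub_le _ (fN_ge0 N0 (le_trans b0 ba)) mu mv) _.
have := L4vecD_le (measurable_mxB mu mv) mv.
rewrite (_ : (fun x => _) = u); last by apply/funext => x; rewrite subrK.
rewrite Ha Hb; have [->|] := eqVneq (L4vec D (fun x => u x - v x)%R) +oo.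
  by move=> _; rewrite [leRHS]gt0_muley ?leey // lte_fin mulr_gt0.
rewrite -ltey -ge0_fin_numE ?L4vec_ge0 // => /fineK <-.
rewrite -!EFinM -!EFinD !lee_fin -lerBlDr => ab.
exact: fN_cross_terms_le.
Qed.

End truncated_tensor_estimates.

Theorem lemma3p1 (R : realType) (Omega : set (R3 R)) (N : R)
  (hOpen : open Omega) (hConn : connected Omega) (hNe : Omega !=set0)
  (hBdd : bounded_set Omega) (hN : 0 < N) :
  forall u v : R3 R -> 'rV[R]_3, inL4 Omega u -> inL4 Omega v ->
    (L2mat Omega (fun x => (FN Omega N u *: tens (u x) (u x) - FN Omega N v *: tens (v x) (v x))%R)
       <= (3 * N)%R%:E * L4vec Omega (fun x => (u x - v x)%R))%E /\
    (L2mat Omega (fun x => (FN Omega N u *: tens (u x) (u x))%R) <= N%:E * L4vec Omega u)%E.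
Proof.
have mO := open_measurable_R3 hOpen.
move=> u v hu hv; split; last exact: L2mat_FN_le.
wlog vu : u v hu hv / fine (L4vec Omega v) <= fine (L4vec Omega u).
  move=> wlog_vu; have [|/ltW uv] := leP (fine (L4vec Omega v)) (fine (L4vec Omega u)).
    exact: wlog_vu.
  by rewrite L2mat_subC L4vec_subC; exact: wlog_vu.
have [mu mv] := (measurable_mx_inL4 hu, measurable_mx_inL4 hv).
exact: (L2mat_fN_sub_le mO hN mu mv (esym (L4vec_fineK hu)) (esym (L4vec_fineK hv))
  (fine_ge0 (L4vec_ge0 _ _)) vu).
Qed.
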